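(* Consider the BSSC with parameters $(\alpha,\beta)\in[0,1]^2$, $\alpha+\beta\neq1$, used with feedback and without transmission cost. Let $$\mu=\frac{H(\beta)-H(\alpha)}{1-\alpha-\beta},\qquad\lambda=\frac{1}{1+2^{\mu}},\qquad\nu=\frac{1-(1-\beta)(1+2^{\mu})}{(\alpha+\beta-1)(1+2^{\mu})}.$$ (a) For every $n\ge0$ and every initial state $b_{-1}\in\{0,1\}$, the supremum in $C^{FB,BSSC}_{A^n\to B^n}$ is attained by the time-invariant input distribution $\pi_i(a_i|a^{i-1},b^{i-1})=\pi^{TI}(a_i|b_{i-1})$ for all $i=0,\dots,n$, where $\pi^{TI}(a|b)=\nu$ if $a=b$ and $1-\nu$ if $a\ne b$; the corresponding channel output transition is $\mathbf P(b_i|b^{i-1})=\mathbf P^{TI}(b_i|b_{i-1})$ with $\mathbf P^{TI}(b'|b)=\lambda$ if $b'=b$ and $1-\lambda$ if $b'\ne b$. Moreover $$C^{FB,BSSC}_{A^n\to B^n}=(n+1)\max_{\pi(\cdot|b_{-1})}I(A_0;B_0|B_{-1}=b_{-1})=(n+1)\big[H(\lambda)-\nu H(\alpha)-(1-\nu)H(\beta)\big]\quad\forall b_{-1}\in\{0,1\}.$$ (b) The feedback capacity $C^{FB,BSSC}_{A^\infty\to B^\infty}=\lim_{n\to\infty}\frac1{n+1}C^{FB,BSSC}_{A^n\to B^n}$ equals $H(\lambda)-\nu H(\alpha)-(1-\nu)H(\beta)=\max_{\pi(\cdot|b_{-1})}I(A_0;B_0|B_{-1}=b_{-1})$ for every $b_{-1}$,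 and is independent of the initial state.
   Context: The Binary State Symmetric Channel BSSC$(\alpha,\beta)$ has $\mathbb A=\mathbb B=\{0,1\}$ and time-invariant transition probabilities $\mathbf P(b_i|a_i,b_{i-1})$ given by $\mathbf P(b_i=a_i|a_i,b_{i-1})=\alpha$ if $a_i=b_{i-1}$ and $\mathbf P(b_i=a_i|a_i,b_{i-1})=\beta$ if $a_i\ne b_{i-1}$ (i.e. $\mathbf P(0|0,0)=\alpha$, $\mathbf P(0|0,1)=\beta$, $\mathbf P(0|1,0)=1-\beta$, $\mathbf P(0|1,1)=1-\alpha$, where the conditioning is on $(a_i,b_{i-1})$). $H(x)=-x\log_2x-(1-x)\log_2(1-x)$ is the binary entropy. With the initial state $B_{-1}=b_{-1}$ fixed and known to encoder and decoder, $C^{FB,BSSC}_{A^n\to B^n}=\sup\sum_{i=0}^nI(A^i;B_i|B^{i-1})$, the supremum over all feedback input distributions $\{\mathbf P(a_i|a^{i-1},b^{i-1})\}_{i=0}^n$. $I(A_0;B_0|B_{-1}=b_{-1})$ is evaluated with $A_0\sim\pi(\cdot|b_{-1})$ and $B_0\sim\mathbf P(\cdot|A_0,b_{-1})$. *)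

From Stdlib Require Import Reals Lra List.
Import ListNotations.
Open Scope R_scope.

Definition log2 (x : R) : R := ln x / ln 2.
Definition plogp (x : R) : R := if Req_EM_T x 0 then 0 else x * log2 x.
Definition Hb (x : R) : R := - plogp x - plogp (1 - x).

Fixpoint bseqs (k : nat) : list (list bool) :=
  match k with
  | O => [ [] ]
  | S k => flat_map (fun s => [s ++ [false]; s ++ [true]]) (bseqs k)
  end.

Definition sumL {T : Type} (f : T -> R) (l : list T) : R :=
  fold_right (fun s acc => f s + acc) 0 l.

(** BSSC(alpha,beta): bssc al be b a bprev = P(B_i = b | A_i = a, B_{i-1} = bprev) *)
Definition bssc (al be : R) (b a bprev : bool) : R :=
  if Bool.eqb a bprev
  then (if Bool.eqb b a then al else 1 - al)
  else (if Bool.eqb b a then be else 1 - be).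

(** feedback input distribution: pol i as bs a = P(A_i = a | A^{i-1} = as, B^{i-1} = bs)
    (the initial state b_{-1} is fixed and known; the policy may be chosen for it) *)
Definition policy := nat -> list bool -> list bool -> bool -> R.

Definition valid_policy (pol : policy) : Prop :=
  forall i as_ bs, (forall a, 0 <= pol i as_ bs a) /\ pol i as_ bs true + pol i as_ bs false = 1.

(** state B_{j-1} given the output history bs, with B_{-1} = bm1 *)
Definition prev_state (bm1 : bool) (j : nat) (bs : list bool) : bool :=
  match j with O => bm1 | S j' => nth j' bs false end.

(** joint probability P(A^{m-1} = as, B^{m-1} = bs | B_{-1} = bm1) *)
Fixpoint joint (al be : R) (pol : policy) (bm1 : bool) (m : nat)
    (as_ bs : list bool) : R :=
  match m with
  | O => 1
  | S j => joint al be pol bm1 j as_ bs *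
           (pol j (firstn j as_) (firstn j bs) (nth j as_ false) *
            bssc al be (nth j bs false) (nth j as_ false) (prev_state bm1 j bs))
  end.

(** conditional mutual information I(A^i ; B_i | B^{i-1}) (given B_{-1} = bm1) *)
Definition cmi (al be : R) (pol : policy) (bm1 : bool) (i : nat) : R :=
  let m := S i in
  sumL (fun as_ => sumL (fun bs =>
    let pab := joint al be pol bm1 m as_ bs in
    let pbprev := sumL (fun as' => joint al be pol bm1 i as' (firstn i bs)) (bseqs i) in
    let pabprev := sumL (fun b => joint al be pol bm1 m as_ (firstn i bs ++ [b])) [false; true] in
    let pb := sumL (fun as' => joint al be pol bm1 m as' bs) (bseqs m) in
    if Req_EM_T pab 0 then 0
    else pab * log2 (pab * pbprev / (pabprev * pb))) (bseqs m)) (bseqs m).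

Definition dirinfo (al be : R) (pol : policy) (bm1 : bool) (n : nat) : R :=
  sum_f_R0 (fun i => cmi al be pol bm1 i) n.

(** set of achievable values; C^{FB}_{A^n -> B^n} is its supremum *)
Definition DI_set (al be : R) (bm1 : bool) (n : nat) (x : R) : Prop :=
  exists pol, valid_policy pol /\ x = dirinfo al be pol bm1 n.

Definition pout (al be : R) (pol : policy) (bm1 : bool) (m : nat) (bs : list bool) : R :=
  sumL (fun as' => joint al be pol bm1 m as' bs) (bseqs m).

(** I(A_0 ; B_0 | B_{-1} = bm1) for input distribution q = pi(.|bm1) *)
Definition mi0 (al be : R) (bm1 : bool) (q : bool -> R) : R :=
  sumL (fun a => sumL (fun b =>
    let pab := q a * bssc al be b a bm1 in
    let pb := sumL (fun a' => q a' * bssc al be b a' bm1) [false; true] in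
    if Req_EM_T pab 0 then 0 else pab * log2 (pab / (q a * pb))) [false; true]) [false; true].

Definition valid_dist (q : bool -> R) : Prop :=
  (forall a, 0 <= q a) /\ q true + q false = 1.

Definition mu_p (al be : R) : R := (Hb be - Hb al) / (1 - al - be).
Definition lambda_p (al be : R) : R := 1 / (1 + Rpower 2 (mu_p al be)).
Definition nu_p (al be : R) : R :=
  (1 - (1 - be) * (1 + Rpower 2 (mu_p al be))) /
  ((al + be - 1) * (1 + Rpower 2 (mu_p al be))).

Definition piTI (al be : R) (bm1 : bool) : policy :=
  fun i _ bs a => if Bool.eqb a (prev_state bm1 i bs) then nu_p al be else 1 - nu_p al be.

Definition PTI (al be : R) (b' b : bool) : R :=
  if Bool.eqb b' b then lambda_p al be else 1 - lambda_p al be.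

Definition cap_value (al be : R) : R :=
  Hb (lambda_p al be) - nu_p al be * Hb al - (1 - nu_p al be) * Hb be.

From Stdlib Require Import Reals List Lra Lia.
Import ListNotations.
Open Scope R_scope.

(* For any feedback policy, I(A^i; B_i | B^{i-1}) equals
     sum P(a^i, b^{i-1}) D(P(. | a_i, b_{i-1}) || P^TI(. | b_{i-1}))
     - E D(P(B_i | B^{i-1}) || P^TI(. | B_{i-1})).
   The parameters mu, lambda, nu are exactly those for which both rows of the channel,
   (alpha, 1 - alpha) and (1 - beta, beta), lie at the same divergence
   C = H(lambda) - nu H(alpha) - (1 - nu) H(beta) from (lambda, 1 - lambda).  Hence the first term
   is C whatever the policy, while the second is <= 0 by Gibbs' inequality and vanishes when the
   output transition is P^TI, which is what pi^TI produces.  So every summand of the directed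
   information is at most C with equality for pi^TI, and the single-letter problem is the case
   i = 0.  That nu is a probability also comes from the equal divergences: the divergence from
   lambda grows strictly away from lambda, so lambda = nu alpha + (1 - nu)(1 - beta) must lie
   between alpha and 1 - beta. *)

Section ListSums.
Context {T : Type}.
Implicit Types (f g : T -> R) (l : list T).

Lemma sumL_plus f g l : sumL (fun x => f x + g x) l = sumL f l + sumL g l.
Proof. induction l as [|x l IH]; simpl; [ring | rewrite IH; ring]. Qed.

Lemma sumL_scal (c : R) f l : sumL (fun x => c * f x) l = c * sumL f l.
Proof. induction l as [|x l IH]; simpl; [ring | rewrite IH; ring]. Qed.

Lemma sumL_ext_in f g l : (forall x, In x l -> f x = g x) -> sumL f l = sumL g l.
Proof.
  induction l as [|x l IH]; simpl; intros H; [reflexivity|].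
  rewrite H, IH; auto.
Qed.

Lemma sumL_le_in f g l : (forall x, In x l -> f x <= g x) -> sumL f l <= sumL g l.
Proof.
  induction l as [|x l IH]; simpl; intros H; [lra|].
  pose proof (H x (or_introl eq_refl)); pose proof (IH (fun y Hy => H y (or_intror Hy))); lra.
Qed.

Lemma sumL_0 l : sumL (fun _ => 0) l = 0.
Proof. induction l as [|x l IH]; simpl; [reflexivity | rewrite IH; ring]. Qed.

Lemma sumL_nonneg f l : (forall x, In x l -> 0 <= f x) -> 0 <= sumL f l.
Proof. intros H. rewrite <- (sumL_0 l). now apply sumL_le_in. Qed.

Lemma sumL_ge_term f l x : (forall y, In y l -> 0 <= f y) -> In x l -> f x <= sumL f l.
Proof.
  induction l as [|y l IH]; simpl; intros H Hx; [contradiction|].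
  pose proof (H y (or_introl eq_refl)).
  assert (0 <= sumL f l) by (apply sumL_nonneg; auto).
  destruct Hx as [<-|Hx]; [lra|].
  pose proof (IH (fun z Hz => H z (or_intror Hz)) Hx); lra.
Qed.

Lemma sumL_flat_map {U : Type} f (g : U -> list T) (l : list U) :
  sumL f (flat_map g l) = sumL (fun y => sumL f (g y)) l.
Proof.
  induction l as [|y l IH]; simpl; [reflexivity|].
  rewrite <- IH. unfold sumL at 1. rewrite fold_right_app. fold (sumL f (flat_map g l)).
  induction (g y) as [|z m IHm]; simpl; [ring | rewrite IHm; ring].
Qed.

End ListSums.

Lemma sumL_swap {T U : Type} (f : T -> U -> R) (l1 : list T) (l2 : list U) :
  sumL (fun x => sumL (fun y => f x y) l2) l1 = sumL (fun y => sumL (fun x => f x y) l1) l2.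
Proof.
  induction l1 as [|x l1 IH]; simpl; [now rewrite sumL_0|].
  rewrite IH, <- sumL_plus. reflexivity.
Qed.

Lemma sumL_bool (f : bool -> R) : sumL f [false; true] = f false + f true.
Proof. simpl. ring. Qed.

Lemma sumL_bseqs_S (f : list bool -> R) i :
  sumL f (bseqs (S i)) = sumL (fun s => sumL (fun b => f (s ++ [b])) [false; true]) (bseqs i).
Proof. apply sumL_flat_map. Qed.

Lemma bseqs_length i s : In s (bseqs i) -> length s = i.
Proof.
  revert s; induction i as [|i IH]; simpl; intros s Hs.
  - destruct Hs as [<-|[]]; reflexivity.
  - apply in_flat_map in Hs as [s' [Hs' Hs]]. apply IH in Hs'.
    destruct Hs as [<-|[<-|[]]]; rewrite length_app; simpl; lia.
Qed.

Lemma firstn_app_le {T : Type} j (l x : list T) :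
  (j <= length l)%nat -> firstn j (l ++ x) = firstn j l.
Proof.
  intros H. rewrite firstn_app. replace (j - length l)%nat with 0%nat by lia. apply app_nil_r.
Qed.

Lemma firstn_snoc {T : Type} i (s : list T) b : length s = i -> firstn i (s ++ [b]) = s.
Proof. intros <-. rewrite firstn_app_le by lia. apply firstn_all. Qed.

Lemma prev_state_app bm1 j (l x : list bool) :
  (j <= length l)%nat -> prev_state bm1 j (l ++ x) = prev_state bm1 j l.
Proof. intros H. destruct j; simpl; [reflexivity|]. apply app_nth1. lia. Qed.

Lemma ln2_pos : 0 < ln 2.
Proof. pose proof ln_lt_2; lra. Qed.

Lemma log2_1 : log2 1 = 0.
Proof. unfold log2. rewrite ln_1. unfold Rdiv. ring. Qed.

Lemma log2_mult x y : 0 < x -> 0 < y -> log2 (x * y) = log2 x + log2 y.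
Proof. intros Hx Hy. unfold log2. rewrite ln_mult by assumption. unfold Rdiv. ring. Qed.

Lemma log2_div x y : 0 < x -> 0 < y -> log2 (x / y) = log2 x - log2 y.
Proof.
  intros Hx Hy. unfold Rdiv at 1. rewrite log2_mult by (auto; now apply Rinv_0_lt_compat).
  unfold log2. rewrite ln_Rinv by assumption. unfold Rdiv. ring.
Qed.

Lemma log2_le_compat x y : 0 < x -> x <= y -> log2 x <= log2 y.
Proof.
  intros Hx [Hxy|<-]; [|lra]. pose proof ln2_pos. unfold log2.
  apply Rmult_le_compat_r; [left; now apply Rinv_0_lt_compat|].
  left; now apply ln_increasing.
Qed.

Lemma log2_Rpower2 x : log2 (Rpower 2 x) = x.
Proof. pose proof ln2_pos. unfold log2. rewrite ln_Rpower. field. lra. Qed.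

Lemma log2_le_sub1 y : 0 < y -> log2 y <= (y - 1) / ln 2.
Proof.
  intros Hy. pose proof ln2_pos. pose proof (exp_ineq1_le (ln y)). rewrite exp_ln in * by lra.
  unfold log2, Rdiv. apply Rmult_le_compat_r; [left; now apply Rinv_0_lt_compat | lra].
Qed.

Lemma log2_lt_sub1 y : 0 < y -> y <> 1 -> log2 y < (y - 1) / ln 2.
Proof.
  intros Hy Hy1. pose proof ln2_pos.
  assert (Hln : ln y <> 0) by (intros E; apply Hy1; rewrite <- (exp_ln y), E by lra; apply exp_0).
  pose proof (exp_ineq1 _ Hln). rewrite exp_ln in * by lra.
  unfold log2, Rdiv. apply Rmult_lt_compat_r; [now apply Rinv_0_lt_compat | lra].
Qed.

Lemma xlog2_div_le x y : 0 <= x -> 0 <= y -> (0 < x -> 0 < y) ->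
  x * log2 (y / x) <= (y - x) / ln 2.
Proof.
  intros Hx Hy Hxy. pose proof ln2_pos.
  destruct Hx as [Hx|<-].
  2: { rewrite Rmult_0_l. unfold Rdiv.
       apply Rmult_le_pos; [lra | left; now apply Rinv_0_lt_compat]. }
  specialize (Hxy Hx). pose proof (log2_le_sub1 (y / x) ltac:(now apply Rdiv_lt_0_compat)).
  replace ((y - x) / ln 2) with (x * ((y / x - 1) / ln 2)) by (field; lra).
  now apply Rmult_le_compat_l; [lra|].
Qed.

Lemma xlog2_div_lt x y : 0 < x -> 0 < y -> x <> y -> x * log2 (y / x) < (y - x) / ln 2.
Proof.
  intros Hx Hy Hxy. pose proof ln2_pos.
  assert (y / x <> 1) by (intros E; apply Hxy; unfold Rdiv in E;
    rewrite <- (Rmult_1_l x), <- E; field; lra).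
  pose proof (log2_lt_sub1 (y / x) ltac:(now apply Rdiv_lt_0_compat) ltac:(assumption)).
  replace ((y - x) / ln 2) with (x * ((y / x - 1) / ln 2)) by (field; lra).
  now apply Rmult_lt_compat_l.
Qed.

Lemma xlog2_div_diag x : x * log2 (x / x) = 0.
Proof.
  destruct (Req_dec x 0) as [->|Hx]; [ring|].
  rewrite Rdiv_diag, log2_1 by assumption. ring.
Qed.

Lemma plogp_0 : plogp 0 = 0.
Proof. unfold plogp. destruct (Req_EM_T 0 0); [reflexivity | lra]. Qed.

Lemma plogp_pos x : 0 < x -> plogp x = x * log2 x.
Proof. intros Hx. unfold plogp. destruct (Req_EM_T x 0); [lra | reflexivity]. Qed.

Lemma gibbs_binary Q0 Q1 r0 r1 P : 0 <= Q0 -> 0 <= Q1 -> Q0 + Q1 = P ->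
  0 < r0 -> 0 < r1 -> r0 + r1 = 1 ->
  Q0 * log2 (r0 * P / Q0) + Q1 * log2 (r1 * P / Q1) <= 0.
Proof.
  intros HQ0 HQ1 HP Hr0 Hr1 Hr. pose proof ln2_pos.
  assert (B0 : Q0 * log2 (r0 * P / Q0) <= (r0 * P - Q0) / ln 2)
    by (apply xlog2_div_le; nra).
  assert (B1 : Q1 * log2 (r1 * P / Q1) <= (r1 * P - Q1) / ln 2)
    by (apply xlog2_div_le; nra).
  assert ((r0 * P - Q0) / ln 2 + (r1 * P - Q1) / ln 2 = 0).
  { replace r1 with (1 - r0) by lra. field_simplify; [|lra]. rewrite <- HP. field. lra. }
  lra.
Qed.

(** * Binary relative entropy *)

Definition kl_term (w r : R) : R := plogp w - w * log2 r.

Definition kl (w r : R) : R := kl_term w r + kl_term (1 - w) (1 - r).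

Lemma kl_term_0 r : kl_term 0 r = 0.
Proof. unfold kl_term. rewrite plogp_0. ring. Qed.

Lemma kl_term_eq w r : 0 <= w -> 0 < r -> kl_term w r = - (w * log2 (r / w)).
Proof.
  intros [Hw|<-] Hr; [|rewrite kl_term_0; ring].
  unfold kl_term. rewrite plogp_pos, log2_div by assumption. ring.
Qed.

Lemma kl_pos w r : 0 <= w <= 1 -> 0 < r < 1 -> w <> r -> 0 < kl w r.
Proof.
  intros Hw Hr Hwr. pose proof ln2_pos. unfold kl.
  rewrite !kl_term_eq by lra.
  assert (Bw : w * log2 (r / w) <= (r - w) / ln 2) by (apply xlog2_div_le; lra).
  assert (B1w : (1 - w) * log2 ((1 - r) / (1 - w)) <= ((1 - r) - (1 - w)) / ln 2)
    by (apply xlog2_div_le; lra).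
  assert (Hsum : (r - w) / ln 2 + ((1 - r) - (1 - w)) / ln 2 = 0) by (field; lra).
  destruct (Req_dec w 0) as [->|Hw0].
  - pose proof (xlog2_div_lt (1 - 0) (1 - r) ltac:(lra) ltac:(lra) ltac:(lra)). lra.
  - pose proof (xlog2_div_lt w r ltac:(lra) ltac:(lra) Hwr). lra.
Qed.

Lemma kl_sym w r : kl w r = kl (1 - w) (1 - r).
Proof.
  unfold kl. replace (1 - (1 - w)) with w by ring. replace (1 - (1 - r)) with r by ring. ring.
Qed.

(* Three-point identity: [D(w2|r) - D(w1|r) = D(w2|w1) + (w2 - w1) * slope],
   with [slope >= 0] when [r <= w1]. *)
Lemma kl_lt_right w1 w2 r : 0 < r < 1 -> r <= w1 -> w1 < w2 <= 1 -> kl w1 r < kl w2 r.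
Proof.
  intros Hr H1 H2.
  assert (Hid : kl w2 r - kl w1 r = kl w2 w1 +
     (w2 - w1) * ((log2 w1 - log2 r) + (log2 (1 - r) - log2 (1 - w1)))).
  { unfold kl, kl_term. rewrite (plogp_pos w1), (plogp_pos (1 - w1)) by lra. ring. }
  pose proof (kl_pos w2 w1 ltac:(lra) ltac:(lra) ltac:(lra)).
  pose proof (log2_le_compat r w1 ltac:(lra) H1).
  pose proof (log2_le_compat (1 - w1) (1 - r) ltac:(lra) ltac:(lra)).
  assert (0 <= (w2 - w1) * ((log2 w1 - log2 r) + (log2 (1 - r) - log2 (1 - w1))))
    by (apply Rmult_le_pos; lra).
  lra.
Qed.

Lemma kl_lt_left w1 w2 r : 0 < r < 1 -> 0 <= w2 < w1 -> w1 <= r -> kl w1 r < kl w2 r.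
Proof. intros. rewrite (kl_sym w1), (kl_sym w2). apply kl_lt_right; lra. Qed.

(* If [nu < 0], then [r] lies beyond [y] on the line through [x] and [y],
   so [y] is strictly closer to [r]. *)
Lemma kl_eq_weight_nonneg x y r nu : 0 <= x <= 1 -> 0 <= y <= 1 -> 0 < r < 1 -> x <> y ->
  r = nu * x + (1 - nu) * y -> kl x r = kl y r -> 0 <= nu.
Proof.
  intros Hx Hy Hr Hxy Hrnu Heq. apply Rnot_lt_le. intros Hnu.
  destruct (Rlt_dec x y) as [Hlt|Hge].
  - assert (y < r) by nra. pose proof (kl_lt_left y x r Hr ltac:(lra) ltac:(lra)). lra.
  - assert (r < y) by nra. pose proof (kl_lt_right y x r Hr ltac:(lra) ltac:(lra)). lra.
Qed.

Lemma kl_eq_weight_bounds x y r nu : 0 <= x <= 1 -> 0 <= y <= 1 -> 0 < r < 1 -> x <> y ->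
  r = nu * x + (1 - nu) * y -> kl x r = kl y r -> 0 <= nu <= 1.
Proof.
  intros. split; [now apply (kl_eq_weight_nonneg x y r)|].
  enough (0 <= 1 - nu) by lra.
  apply (kl_eq_weight_nonneg y x r); auto. lra.
Qed.

(* With [J = P(a^{i-1}, b^{i-1})], [p = pi(a_i | a^{i-1}, b^{i-1})], [w = P(b_i | a_i, b_{i-1})],
   [P = P(b^{i-1})], [Q = P(b^i)] and [r = P^TI(b_i | b_{i-1})],
   the left side is a summand of [cmi]. *)
Lemma info_term_split J p w r P Q :
  0 <= J -> 0 <= p -> 0 <= w -> 0 < r -> J <= P -> J * (p * w) <= Q ->
  (if Req_EM_T (J * (p * w)) 0 then 0 else J * (p * w) * log2 (J * (p * w) * P / (J * p * Q))) =
  J * p * kl_term w r + J * (p * w) * log2 (r * P / Q).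
Proof.
  intros HJ Hp Hw Hr HP HQ.
  destruct (Req_EM_T (J * (p * w)) 0) as [E|E].
  - destruct (Rmult_integral _ _ E) as [ -> | E' ]; [ring|].
    destruct (Rmult_integral _ _ E') as [ -> | -> ]; [ring|]. rewrite kl_term_0. ring.
  - assert (0 < J) by (destruct HJ as [|<-]; [assumption | rewrite Rmult_0_l in E; lra]).
    assert (0 < p) by (destruct Hp as [|<-]; [assumption | rewrite Rmult_0_l, Rmult_0_r in E; lra]).
    assert (0 < w) by (destruct Hw as [|<-]; [assumption | rewrite !Rmult_0_r in E; lra]).
    assert (0 < J * (p * w)) by (apply Rmult_lt_0_compat; [|apply Rmult_lt_0_compat]; assumption).
    replace (J * (p * w) * P / (J * p * Q)) with (w * P / Q) by (field; lra).
    unfold kl_term. rewrite plogp_pos by assumption.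
    rewrite !log2_div, !log2_mult by (try apply Rmult_lt_0_compat; lra). ring.
Qed.

(** * The capacity-achieving parameters *)

Section Equalizer.
Variables al be : R.
Hypothesis Hab : al + be <> 1.

Lemma Rpower_mu_pos : 0 < Rpower 2 (mu_p al be).
Proof. apply exp_pos. Qed.

Lemma lambda_bounds : 0 < lambda_p al be < 1.
Proof.
  pose proof Rpower_mu_pos. unfold lambda_p. split.
  - apply Rdiv_lt_0_compat; lra.
  - apply (Rmult_lt_reg_r (1 + Rpower 2 (mu_p al be))); [lra|]. field_simplify; lra.
Qed.

Lemma log2_one_sub_lambda : log2 (1 - lambda_p al be) = mu_p al be + log2 (lambda_p al be).
Proof.
  pose proof Rpower_mu_pos. pose proof lambda_bounds.
  replace (1 - lambda_p al be) with (Rpower 2 (mu_p al be) * lambda_p al be)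
    by (unfold lambda_p; field; lra).
  now rewrite log2_mult, log2_Rpower2.
Qed.

Lemma lambda_mix : lambda_p al be = nu_p al be * al + (1 - nu_p al be) * (1 - be).
Proof. pose proof Rpower_mu_pos. unfold lambda_p, nu_p. field. split; lra. Qed.

Lemma Hb_diff : Hb be = Hb al + mu_p al be * (1 - al - be).
Proof. unfold mu_p. field. lra. Qed.

(* This is what [mu], [lambda] and [nu] are designed for: the channel rows [(al, 1 - al)] and
   [(1 - be, be)] lie at the same divergence from the output law [(lambda, 1 - lambda)]. *)
Lemma kl_lambda_eq_cap : kl al (lambda_p al be) = cap_value al be /\
                         kl (1 - be) (lambda_p al be) = cap_value al be.
Proof.
  pose proof lambda_bounds.
  assert (HbL : Hb (lambda_p al be) =
    - lambda_p al be * log2 (lambda_p al be) - (1 - lambda_p al be) * log2 (1 - lambda_p al be))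
    by (unfold Hb; rewrite !plogp_pos by lra; ring).
  unfold cap_value, kl, kl_term. rewrite HbL, log2_one_sub_lambda.
  replace (1 - (1 - be)) with be by ring.
  assert (Hal : plogp al + plogp (1 - al) = - Hb al) by (unfold Hb; ring).
  assert (Hbe : plogp (1 - be) + plogp be = - Hb be) by (unfold Hb; ring).
  set (X := log2 (lambda_p al be)). rewrite lambda_mix, Hb_diff in *.
  split; lra.
Qed.

Lemma nu_bounds : 0 <= al <= 1 -> 0 <= be <= 1 -> 0 <= nu_p al be <= 1.
Proof.
  intros Hal Hbe. destruct kl_lambda_eq_cap as [E1 E2].
  apply (kl_eq_weight_bounds al (1 - be) (lambda_p al be)); try lra.
  - exact lambda_bounds.
  - exact lambda_mix.
Qed.

Lemma bssc_div_PTI a p :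
  sumL (fun b => kl_term (bssc al be b a p) (PTI al be b p)) [false; true] = cap_value al be.
Proof.
  destruct kl_lambda_eq_cap as [E1 E2]. unfold kl in E1, E2.
  replace (1 - (1 - be)) with be in E2 by ring.
  rewrite sumL_bool. unfold bssc, PTI. destruct a, p; simpl; lra.
Qed.

Lemma PTI_pos b p : 0 < PTI al be b p.
Proof. unfold PTI. destruct lambda_bounds. destruct Bool.eqb; lra. Qed.

Lemma PTI_sum p : PTI al be false p + PTI al be true p = 1.
Proof. unfold PTI. destruct p; simpl; ring. Qed.

End Equalizer.

(** * Directed information of the BSSC *)

Section Channel.
Variables (al be : R) (bm1 : bool) (pol : policy).
Hypotheses (Hal : 0 <= al <= 1) (Hbe : 0 <= be <= 1) (Hpol : valid_policy pol).

Lemma bssc_nonneg b a p : 0 <= bssc al be b a p.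
Proof. unfold bssc. destruct a, p, b; simpl; lra. Qed.

Lemma bssc_sum a p : bssc al be false a p + bssc al be true a p = 1.
Proof. unfold bssc. destruct a, p; simpl; ring. Qed.

Lemma joint_app j as_ bs xa xb : (j <= length as_)%nat -> (j <= length bs)%nat ->
  joint al be pol bm1 j (as_ ++ xa) (bs ++ xb) = joint al be pol bm1 j as_ bs.
Proof.
  induction j as [|j IH]; intros Ha Hb; simpl; [reflexivity|].
  rewrite IH, !firstn_app_le, !app_nth1, prev_state_app by lia. reflexivity.
Qed.

Lemma joint_snoc i u s a b : length u = i -> length s = i ->
  joint al be pol bm1 (S i) (u ++ [a]) (s ++ [b]) =
  joint al be pol bm1 i u s * (pol i u s a * bssc al be b a (prev_state bm1 i s)).
Proof.
  intros Hu Hs. simpl. rewrite joint_app, !firstn_app_le, !firstn_all2, prev_state_app by lia.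
  rewrite !app_nth2, Hu, Hs, Nat.sub_diag by lia. reflexivity.
Qed.

Lemma joint_nonneg j u s : 0 <= joint al be pol bm1 j u s.
Proof.
  induction j as [|j IH]; simpl; [lra|].
  apply Rmult_le_pos, Rmult_le_pos; auto. apply Hpol. apply bssc_nonneg.
Qed.

Lemma joint_snoc_marginal i u s a : length u = i -> length s = i ->
  sumL (fun b => joint al be pol bm1 (S i) (u ++ [a]) (s ++ [b])) [false; true] =
  joint al be pol bm1 i u s * pol i u s a.
Proof.
  intros Hu Hs. rewrite sumL_bool, !joint_snoc by assumption.
  rewrite <- !Rmult_plus_distr_l, bssc_sum. ring.
Qed.

Lemma joint_mass i :
  sumL (fun u => sumL (fun s => joint al be pol bm1 i u s) (bseqs i)) (bseqs i) = 1.
Proof.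
  induction i as [|i IH]; [simpl; ring|].
  rewrite sumL_bseqs_S, <- IH. apply sumL_ext_in. intros u Hu. apply bseqs_length in Hu.
  rewrite sumL_bool, !sumL_bseqs_S, <- sumL_plus. apply sumL_ext_in. intros s Hs.
  apply bseqs_length in Hs. rewrite !joint_snoc_marginal by assumption.
  destruct (Hpol i u s) as [_ H1]. rewrite <- Rmult_plus_distr_l, Rplus_comm, H1. ring.
Qed.

Lemma pout_nonneg j s : 0 <= pout al be pol bm1 j s.
Proof. apply sumL_nonneg. intros. apply joint_nonneg. Qed.

Lemma In_bseqs_snoc i u a : In u (bseqs i) -> In (u ++ [a]) (bseqs (S i)).
Proof. intros Hu. apply in_flat_map. exists u. destruct a; simpl; auto. Qed.

Lemma joint_le_pout j u s : In u (bseqs j) -> joint al be pol bm1 j u s <= pout al be pol bm1 j s.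
Proof.
  intros Hu. apply (sumL_ge_term (fun u => joint al be pol bm1 j u s)); auto.
  intros. apply joint_nonneg.
Qed.

Lemma pout_marginal i s : length s = i ->
  pout al be pol bm1 (S i) (s ++ [false]) + pout al be pol bm1 (S i) (s ++ [true]) =
  pout al be pol bm1 i s.
Proof.
  intros Hs. unfold pout. rewrite !sumL_bseqs_S, <- sumL_plus.
  apply sumL_ext_in. intros u Hu. apply bseqs_length in Hu.
  rewrite <- sumL_plus, (sumL_ext_in _ (fun a => joint al be pol bm1 i u s * pol i u s a)).
  - rewrite sumL_scal, sumL_bool. destruct (Hpol i u s) as [_ H1]. rewrite Rplus_comm, H1. ring.
  - intros a _. rewrite <- joint_snoc_marginal by assumption. symmetry. apply sumL_bool.
Qed.

Definition log_ratio_TI i s b : R :=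
  log2 (PTI al be b (prev_state bm1 i s) * pout al be pol bm1 i s /
        pout al be pol bm1 (S i) (s ++ [b])).

Definition out_gap i : R :=
  sumL (fun s => sumL (fun b =>
    pout al be pol bm1 (S i) (s ++ [b]) * log_ratio_TI i s b) [false; true]) (bseqs i).

Lemma cmi_expand i : cmi al be pol bm1 i =
  sumL (fun u => sumL (fun s => sumL (fun b => sumL (fun a =>
    joint al be pol bm1 i u s * pol i u s a *
      kl_term (bssc al be b a (prev_state bm1 i s)) (PTI al be b (prev_state bm1 i s)) +
    joint al be pol bm1 (S i) (u ++ [a]) (s ++ [b]) * log_ratio_TI i s b)
  [false; true]) [false; true]) (bseqs i)) (bseqs i).
Proof.
  unfold cmi. rewrite sumL_bseqs_S. apply sumL_ext_in. intros u Hu.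
  rewrite sumL_swap, sumL_bseqs_S. apply sumL_ext_in. intros s Hs.
  apply sumL_ext_in. intros b _. apply sumL_ext_in. intros a _.
  assert (Hs' := Hs). apply bseqs_length in Hs'. assert (Hu' := Hu). apply bseqs_length in Hu'.
  cbv beta zeta. rewrite !firstn_snoc, joint_snoc_marginal by assumption.
  fold (pout al be pol bm1 i s) (pout al be pol bm1 (S i) (s ++ [b])).
  assert (HQ := sumL_ge_term (fun v => joint al be pol bm1 (S i) v (s ++ [b])) _ _
    (fun v _ => joint_nonneg (S i) v (s ++ [b])) (In_bseqs_snoc i u a Hu)).
  cbv beta in HQ. rewrite !joint_snoc in HQ |- * by assumption.
  apply info_term_split; auto using joint_nonneg, bssc_nonneg, joint_le_pout, PTI_pos.
  apply Hpol.
Qed.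

Lemma out_gap_nonpos i : out_gap i <= 0.
Proof.
  unfold out_gap. rewrite <- (sumL_0 (bseqs i)). apply sumL_le_in. intros s Hs.
  apply bseqs_length in Hs. rewrite sumL_bool.
  apply gibbs_binary; auto using pout_nonneg, pout_marginal, PTI_pos, PTI_sum.
Qed.

Lemma out_gap_eq0 i :
  (forall s b, In s (bseqs i) -> pout al be pol bm1 (S i) (s ++ [b]) =
                 PTI al be b (prev_state bm1 i s) * pout al be pol bm1 i s) ->
  out_gap i = 0.
Proof.
  intros HTI. unfold out_gap, log_ratio_TI. rewrite <- (sumL_0 (bseqs i)).
  apply sumL_ext_in. intros s Hs. rewrite sumL_bool, <- !HTI by assumption.
  rewrite <- (Rplus_0_r 0). f_equal; apply xlog2_div_diag.
Qed.

Lemma cmi_decomp i : al + be <> 1 -> cmi al be pol bm1 i = cap_value al be + out_gap i.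
Proof.
  intros Hab. rewrite cmi_expand.
  transitivity (sumL (fun u => sumL (fun s =>
    joint al be pol bm1 i u s * cap_value al be +
    sumL (fun b => sumL (fun a => joint al be pol bm1 (S i) (u ++ [a]) (s ++ [b])) [false; true] *
                   log_ratio_TI i s b) [false; true]) (bseqs i)) (bseqs i)).
  - apply sumL_ext_in. intros u _. apply sumL_ext_in. intros s _.
    pose proof (bssc_div_PTI al be Hab false (prev_state bm1 i s)) as D0.
    pose proof (bssc_div_PTI al be Hab true (prev_state bm1 i s)) as D1.
    destruct (Hpol i u s) as [_ Hsum].
    rewrite sumL_bool in D0, D1. rewrite !sumL_bool.
    set (c := cap_value al be) in *.
    set (p := prev_state bm1 i s) in *.
    set (d := fun b a => kl_term (bssc al be b a p) (PTI al be b p)) in *.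
    fold (d false false) (d true false) (d false true) (d true true) in *.
    replace (d true false) with (c - d false false) by lra.
    replace (d true true) with (c - d false true) by lra.
    replace (pol i u s true) with (1 - pol i u s false) by lra. ring.
  - set (Z := fun u s => sumL (fun b =>
      sumL (fun a => joint al be pol bm1 (S i) (u ++ [a]) (s ++ [b])) [false; true] *
      log_ratio_TI i s b) [false; true]).
    transitivity (cap_value al be *
      sumL (fun u => sumL (fun s => joint al be pol bm1 i u s) (bseqs i)) (bseqs i) +
      sumL (fun u => sumL (fun s => Z u s) (bseqs i)) (bseqs i)).
    { rewrite <- sumL_scal, <- sumL_plus. apply sumL_ext_in. intros u _.
      rewrite <- sumL_scal, <- sumL_plus. apply sumL_ext_in. intros s _. unfold Z. ring. }
    rewrite joint_mass, Rmult_1_r. f_equal.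
    unfold out_gap, Z. rewrite sumL_swap. apply sumL_ext_in. intros s _.
    rewrite sumL_swap. apply sumL_ext_in. intros b _.
    unfold pout. rewrite sumL_bseqs_S, Rmult_comm, <- sumL_scal.
    apply sumL_ext_in. intros u _. ring.
Qed.

Lemma pout_snoc_TI i s b : al + be <> 1 -> length s = i ->
  (forall u a, pol i u s a = piTI al be bm1 i u s a) ->
  pout al be pol bm1 (S i) (s ++ [b]) =
  PTI al be b (prev_state bm1 i s) * pout al be pol bm1 i s.
Proof.
  intros Hab Hs HTI. unfold pout. rewrite sumL_bseqs_S, <- sumL_scal.
  apply sumL_ext_in. intros u Hu. apply bseqs_length in Hu.
  rewrite sumL_bool, !joint_snoc, !HTI by assumption. unfold piTI, PTI, bssc.
  rewrite (lambda_mix al be Hab). destruct (prev_state bm1 i s), b; simpl; ring.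
Qed.

Lemma cmi_le_cap i : al + be <> 1 -> cmi al be pol bm1 i <= cap_value al be.
Proof. intros Hab. rewrite cmi_decomp by assumption. pose proof (out_gap_nonpos i). lra. Qed.

Lemma cmi_eq_cap i : al + be <> 1 ->
  (forall u s a, pol i u s a = piTI al be bm1 i u s a) -> cmi al be pol bm1 i = cap_value al be.
Proof.
  intros Hab HTI. rewrite cmi_decomp, out_gap_eq0 by
    (try intros s b Hs; try apply pout_snoc_TI; auto using bseqs_length). ring.
Qed.
End Channel.

Lemma piTI_valid al be bm1 : 0 <= al <= 1 -> 0 <= be <= 1 -> al + be <> 1 ->
  valid_policy (piTI al be bm1).
Proof.
  intros Hal Hbe Hab i as_ bs. pose proof (nu_bounds al be Hab Hal Hbe). unfold piTI. split.
  - intros a. destruct Bool.eqb; lra.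
  - destruct (prev_state bm1 i bs); simpl; ring.
Qed.

Definition const_policy (q : bool -> R) : policy := fun _ _ _ a => q a.

Lemma const_policy_valid q : valid_dist q -> valid_policy (const_policy q).
Proof. intros Hq i as_ bs. exact Hq. Qed.

Lemma mi0_eq_cmi al be bm1 q : mi0 al be bm1 q = cmi al be (const_policy q) bm1 0.
Proof.
  unfold cmi, mi0, const_policy. simpl.
  rewrite !Rmult_1_l, !Rplus_0_r, !Rmult_1_r, <- !Rmult_plus_distr_l, !bssc_sum, !Rmult_1_r.
  reflexivity.
Qed.

Lemma sum_f_R0_const_le (f : nat -> R) c n :
  (forall i, f i <= c) -> sum_f_R0 f n <= INR (n + 1) * c.
Proof.
  intros Hf. rewrite Nat.add_1_r, Rmult_comm, <- sum_cte.
  apply sum_Rle. intros i _. apply Hf.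
Qed.

Lemma sum_f_R0_const (f : nat -> R) c n :
  (forall i, f i = c) -> sum_f_R0 f n = INR (n + 1) * c.
Proof.
  intros Hf. rewrite Nat.add_1_r, Rmult_comm, <- sum_cte.
  apply sum_eq. intros i _. apply Hf.
Qed.

Section Capacity.
Variables (al be : R) (bm1 : bool).
Hypotheses (Hal : 0 <= al <= 1) (Hbe : 0 <= be <= 1) (Hab : al + be <> 1).

Lemma dirinfo_piTI n : dirinfo al be (piTI al be bm1) bm1 n = INR (n + 1) * cap_value al be.
Proof.
  apply sum_f_R0_const. intros i.
  apply cmi_eq_cap; auto using piTI_valid.
Qed.

Lemma DI_set_lub n : is_lub (DI_set al be bm1 n) (INR (n + 1) * cap_value al be).
Proof.
  split.
  - intros x [pol [Hpol ->]]. apply sum_f_R0_const_le. intros i. now apply cmi_le_cap.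
  - intros M HM. rewrite <- dirinfo_piTI. apply HM.
    exists (piTI al be bm1). auto using piTI_valid.
Qed.

Lemma pout_piTI_transition i bs : length bs = S i ->
  pout al be (piTI al be bm1) bm1 (S i) bs =
  PTI al be (nth i bs false) (prev_state bm1 i bs) *
  pout al be (piTI al be bm1) bm1 i (firstn i bs).
Proof.
  intros Hbs. destruct (exists_last (l := bs)) as [s [b ->]]; [now intros -> |].
  rewrite length_app in Hbs. simpl in Hbs. assert (Hs : length s = i) by lia.
  rewrite firstn_snoc, prev_state_app, app_nth2, Hs, Nat.sub_diag by lia.
  now apply pout_snoc_TI.
Qed.

End Capacity.

Theorem mainTheorem9 (al be : R) (Hal : 0 <= al <= 1) (Hbe : 0 <= be <= 1)
    (Hab : al + be <> 1) :
  (* (a) *)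
  (forall (n : nat) (bm1 : bool),
     valid_policy (piTI al be bm1) /\
     (forall i bs, length bs = S i ->
        pout al be (piTI al be bm1) bm1 (S i) bs =
        PTI al be (nth i bs false) (prev_state bm1 i bs) *
        pout al be (piTI al be bm1) bm1 i (firstn i bs)) /\
     is_lub (DI_set al be bm1 n) (dirinfo al be (piTI al be bm1) bm1 n) /\
     dirinfo al be (piTI al be bm1) bm1 n = INR (n + 1) * cap_value al be /\
     (exists q, valid_dist q /\ mi0 al be bm1 q = cap_value al be) /\
     (forall q, valid_dist q -> mi0 al be bm1 q <= cap_value al be)) /\
  (* (b) *)
  (forall (bm1 : bool) (C : nat -> R),
     (forall n, is_lub (DI_set al be bm1 n) (C n)) ->
     Un_cv (fun n => C n / INR (n + 1)) (cap_value al be)).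
Proof.
  split.
  - intros n bm1. pose proof (piTI_valid al be bm1 Hal Hbe Hab) as HTI.
    rewrite dirinfo_piTI by assumption.
    split; [exact HTI|]. split; [auto using pout_piTI_transition|].
    split; [auto using DI_set_lub|]. split; [reflexivity|]. split.
    + exists (piTI al be bm1 0%nat [] []). split; [apply HTI|].
      rewrite mi0_eq_cmi. apply cmi_eq_cap; auto. apply const_policy_valid, HTI.
    + intros q Hq. rewrite mi0_eq_cmi. apply cmi_le_cap; auto using const_policy_valid.
  - intros bm1 C HC eps Heps. exists 0%nat. intros n _.
    rewrite (is_lub_u _ _ _ (HC n) (DI_set_lub al be bm1 Hal Hbe Hab n)).
    assert (0 < INR (n + 1)) by (apply lt_0_INR; lia).
    unfold R_dist. replace (_ / _ - _) with 0 by (field; lra). now rewrite Rabs_R0.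
Qed.
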